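(* Every $C^k$ split map $\Phi$ of the split annulus $\mathbf A$ to itself is of the form $\Phi(x,y)=(\varphi(x),\varphi(y))$, where $\varphi$ is a $C^k$ diffeomorphism of $\mathbf{RP}^1$ (a homeomorphism if $k=0$). Moreover, $\Phi$ is an isometry of $(\mathbf A,g_0)$ if and only if $\varphi$ is projective.
   Context: $\mathbf A=(\mathbf{RP}^1\times\mathbf{RP}^1)\setminus\Delta$ ($\Delta$ the diagonal) with split structure $(\mathcal L_1,\mathcal L_2)$, where $\mathcal L_i$ is the foliation by fibers of the projection to the $i$-th factor. A split map of $\mathbf A$ is a homeomorphism of $\mathbf A$ mapping each leaf of $\mathcal L_1$ onto a leaf of $\mathcal L_1$ and each leaf of $\mathcal L_2$ onto a leaf of $\mathcal L_2$; a $C^k$ split map is one that is moreover a $C^k$ diffeomorphism. $g_0$ is the de Sitter metric, $g_0=\frac{2\,\mathrm dx\,\mathrm dy}{(x-y)^2}$ in any affine chart. *)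

From Stdlib Require Import Reals List.
From Coquelicot Require Import Coquelicot.
Open Scope R_scope.

(** RP^1 = R ∪ {∞}; [Some x] is the point with affine coordinate x, [None] is ∞. *)
Definition P1 := option R.

(** Affine charts: for each point a of RP^1, an affine coordinate on RP^1 \ {a}.
    [chart None] is the standard coordinate x; [chart (Some r)] is x ↦ -1/(x-r)
    (sending ∞ to 0).  Values outside the domain (p = a) are junk. *)
Definition chart (a p : P1) : R :=
  match a, p with
  | None, Some x => x
  | None, None => 0
  | Some r, Some x => -1 / (x - r)
  | Some _, None => 0
  end.

(** Inverse of [chart a], a bijection R -> RP^1 \ {a}. *)
Definition cinv (a : P1) (t : R) : P1 :=
  match a with
  | None => Some t
  | Some r => if Req_EM_T t 0 then None else Some (r - 1 / t)
  end.

Inductive reg := Fin (k : nat) | Infty.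

Definition Ck1 (k : nat) (g : R -> R) (t : R) : Prop :=
  locally t (fun s => forall j, (j < k)%nat -> ex_derive (Derive_n g j) s) /\
  (forall j, (j <= k)%nat -> continuous (Derive_n g j) t).

Definition P1_Ck (k : nat) (phi : P1 -> P1) : Prop :=
  forall (a b : P1) (t : R), phi (cinv a t) <> b ->
    locally t (fun s => phi (cinv a s) <> b) /\
    Ck1 k (fun s => chart b (phi (cinv a s))) t.

Definition P1_C (r : reg) (phi : P1 -> P1) : Prop :=
  match r with Fin k => P1_Ck k phi | Infty => forall k, P1_Ck k phi end.

Definition P1_diffeo (r : reg) (phi : P1 -> P1) : Prop :=
  exists psi : P1 -> P1,
    (forall p, psi (phi p) = p) /\ (forall p, phi (psi p) = p) /\
    P1_C r phi /\ P1_C r psi.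

(** Iterated partial derivatives of f : R*R -> R; [true] = d/dx1, [false] = d/dx2. *)
Fixpoint pd (l : list bool) (f : R * R -> R) : R * R -> R :=
  match l with
  | nil => f
  | true :: l' => fun p => Derive (fun t => pd l' f (t, snd p)) (fst p)
  | false :: l' => fun p => Derive (fun t => pd l' f (fst p, t)) (snd p)
  end.

Definition Ck2 (k : nat) (f : R * R -> R) (s : R * R) : Prop :=
  locally s (fun q => forall l : list bool, (length l < k)%nat ->
      ex_derive (fun t => pd l f (t, snd q)) (fst q) /\
      ex_derive (fun t => pd l f (fst q, t)) (snd q)) /\
  (forall l : list bool, (length l <= k)%nat -> continuous (pd l f) s).

(** The split annulus A = (RP^1 x RP^1) \ Δ, as a predicate on RP^1 x RP^1. *)
Definition InA (p : P1 * P1) : Prop := fst p <> snd p.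

Definition cinv2 (a1 a2 : P1) (s : R * R) : P1 * P1 := (cinv a1 (fst s), cinv a2 (snd s)).

(** Maps A -> A of class C^k (represented by total maps on RP^1 x RP^1;
    only their values on A matter), via product affine charts. *)
Definition A_Ck (k : nat) (Phi : P1 * P1 -> P1 * P1) : Prop :=
  forall (a1 a2 b1 b2 : P1) (s : R * R),
    InA (cinv2 a1 a2 s) -> fst (Phi (cinv2 a1 a2 s)) <> b1 ->
    snd (Phi (cinv2 a1 a2 s)) <> b2 ->
    locally s (fun q => InA (cinv2 a1 a2 q) /\ fst (Phi (cinv2 a1 a2 q)) <> b1 /\
                        snd (Phi (cinv2 a1 a2 q)) <> b2) /\
    Ck2 k (fun q => chart b1 (fst (Phi (cinv2 a1 a2 q)))) s /\
    Ck2 k (fun q => chart b2 (snd (Phi (cinv2 a1 a2 q)))) s.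

Definition A_C (r : reg) (Phi : P1 * P1 -> P1 * P1) : Prop :=
  match r with Fin k => A_Ck k Phi | Infty => forall k, A_Ck k Phi end.

Definition A_diffeo (r : reg) (Phi : P1 * P1 -> P1 * P1) : Prop :=
  (forall p, InA p -> InA (Phi p)) /\
  exists Psi : P1 * P1 -> P1 * P1,
    (forall p, InA p -> InA (Psi p)) /\
    (forall p, InA p -> Psi (Phi p) = p) /\
    (forall p, InA p -> Phi (Psi p) = p) /\
    A_C r Phi /\ A_C r Psi.

(** Leaves of L1 are {(x0, y) ∈ A}, leaves of L2 are {(x, y0) ∈ A}; Phi maps each
    leaf onto a leaf of the same foliation. *)
Definition maps_L1_leaves (Phi : P1 * P1 -> P1 * P1) : Prop :=
  forall x0 : P1, exists x1 : P1,
    (forall p, InA p -> fst p = x0 -> fst (Phi p) = x1) /\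
    (forall q, InA q -> fst q = x1 -> exists p, InA p /\ fst p = x0 /\ Phi p = q).

Definition maps_L2_leaves (Phi : P1 * P1 -> P1 * P1) : Prop :=
  forall y0 : P1, exists y1 : P1,
    (forall p, InA p -> snd p = y0 -> snd (Phi p) = y1) /\
    (forall q, InA q -> snd q = y1 -> exists p, InA p /\ snd p = y0 /\ Phi p = q).

Definition split_map (r : reg) (Phi : P1 * P1 -> P1 * P1) : Prop :=
  A_diffeo r Phi /\ maps_L1_leaves Phi /\ maps_L2_leaves Phi.

Definition mobius (a b c d : R) (p : P1) : P1 :=
  match p with
  | None => if Req_EM_T c 0 then None else Some (a / c)
  | Some x => if Req_EM_T (c * x + d) 0 then None
              else Some ((a * x + b) / (c * x + d))
  end.

Definition projective (phi : P1 -> P1) : Prop :=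
  exists a b c d : R, a * d - b * c <> 0 /\ forall p, phi p = mobius a b c d p.

(** Isometry of (A, g0), g0 = 2 dx dy / (x - y)^2 in any affine chart (the same
    affine chart on both factors): Phi is C^1 and Phi^* g0 = g0, i.e. writing
    Phi = (u, v) in affine charts (a,a) -> (b,b),
    du dv = u1 v1 ds1^2 + (u1 v2 + u2 v1) ds1 ds2 + u2 v2 ds2^2 must equal
    (u - v)^2/(s1 - s2)^2 ds1 ds2. *)
Definition isometry_g0 (Phi : P1 * P1 -> P1 * P1) : Prop :=
  A_Ck 1 Phi /\
  forall (a b : P1) (s : R * R),
    InA (cinv2 a a s) -> fst (Phi (cinv2 a a s)) <> b ->
    snd (Phi (cinv2 a a s)) <> b ->
    let u := fun q => chart b (fst (Phi (cinv2 a a q))) in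
    let v := fun q => chart b (snd (Phi (cinv2 a a q))) in
    pd (true :: nil) u s * pd (true :: nil) v s = 0 /\
    pd (false :: nil) u s * pd (false :: nil) v s = 0 /\
    (pd (true :: nil) u s * pd (false :: nil) v s
       + pd (false :: nil) u s * pd (true :: nil) v s) / (u s - v s) ^ 2
      = 1 / (fst s - snd s) ^ 2.

(* A split map preserves both foliations, hence acts as f1 x f2 for two bijections of RP^1, and
   f1 = f2 =: phi because Phi maps A into A.  In product charts the two components of phi x phi
   each depend on one variable only, so Phi is C^k iff phi is.

   In a chart, phi x phi pulls g0 back to g0 iff the chart expression u of phi satisfies
   u'(x) u'(y) (x - y)^2 = (u x - u y)^2; fractional-linear maps do.  Conversely, in the chart
   sending phi(oo) to oo, u is defined on all of R.  With G = sqrt (u' u'(0)) the identity reads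
   (u x - u y) u'(0) = G x G y (x - y), and comparing three points shows that G is a
   fractional-linear function without pole on R, hence constant: u is affine, phi projective. *)
From Stdlib Require Import Reals List Lra Lia ClassicalEpsilon.
From Coquelicot Require Import Coquelicot.
Open Scope R_scope.

(** * Local analysis in one and two real variables *)

Lemma ball_pair {U V : UniformSpace} (x y : U * V) (e : R) :
  ball x e y <-> ball (fst x) e (fst y) /\ ball (snd x) e (snd y).
Proof. destruct x, y; reflexivity. Qed.

Lemma locally_fst {U V : UniformSpace} (s : U * V) (P : U -> Prop) :
  locally (fst s) P -> locally s (fun q => P (fst q)).
Proof. intros [e He]. exists e. intros q Hq. apply He, ball_pair, Hq. Qed.

Lemma locally_snd {U V : UniformSpace} (s : U * V) (P : V -> Prop) :
  locally (snd s) P -> locally s (fun q => P (snd q)).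
Proof. intros [e He]. exists e. intros q Hq. apply He, ball_pair, Hq. Qed.

Lemma locally_slice_fst {U V : UniformSpace} (t : U) (c : V) (P : U * V -> Prop) :
  locally (t, c) P -> locally t (fun s => P (s, c)).
Proof.
  intros [e He]. exists e. intros s Hs. apply He, ball_pair.
  split; [exact Hs | apply ball_center].
Qed.

Lemma locally_slice_snd {U V : UniformSpace} (c : U) (t : V) (P : U * V -> Prop) :
  locally (c, t) P -> locally t (fun s => P (c, s)).
Proof.
  intros [e He]. exists e. intros s Hs. apply He, ball_pair.
  split; [apply ball_center | exact Hs].
Qed.

Lemma continuous_slice_fst {U V W : UniformSpace} (f : U * V -> W) (t : U) (c : V) :
  continuous f (t, c) -> continuous (fun s => f (s, c)) t.
Proof. intros Hf P HP. exact (locally_slice_fst t c _ (Hf P HP)). Qed.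

Lemma continuous_neq_locally {T : UniformSpace} (h : T -> R) (x : T) (c : R) :
  continuous h x -> h x <> c -> locally x (fun y => h y <> c).
Proof.
  intros Hh Hx. apply (Hh (fun z => z <> c)).
  assert (He : 0 < Rabs (h x - c)) by (apply Rabs_pos_lt; lra).
  exists (mkposreal _ He). intros z Hz Ez. subst z.
  change (Rabs (c - h x) < Rabs (h x - c)) in Hz. rewrite Rabs_minus_sym in Hz. lra.
Qed.

Lemma ex_derive_continuous_R (g : R -> R) (t : R) : ex_derive g t -> continuous g t.
Proof. exact (@ex_derive_continuous R_AbsRing R_NormedModule g t). Qed.

Lemma affine_neq0_locally (C D t : R) :
  C * t + D <> 0 -> locally t (fun s => C * s + D <> 0).
Proof.
  intros Ht. apply (continuous_neq_locally (fun s => C * s + D)); [|exact Ht].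
  apply ex_derive_continuous_R. auto_derive. exact I.
Qed.

Lemma Ck1_ext_loc (k : nat) (g h : R -> R) (t : R) :
  locally t (fun s => g s = h s) -> Ck1 k g t -> Ck1 k h t.
Proof.
  intros Hgh [Hd Hc].
  assert (HDn : locally t (fun s => forall j, Derive_n g j s = Derive_n h j s)).
  { generalize (locally_locally _ _ Hgh). apply filter_imp.
    intros s Hs j. now apply Derive_n_ext_loc. }
  split.
  - generalize (filter_and _ _ (locally_locally _ _ HDn) Hd). apply filter_imp.
    intros s [Hs Hds] j Hj. apply (ex_derive_ext_loc (Derive_n g j)).
    + generalize Hs. apply filter_imp. auto.
    + now apply Hds.
  - intros j Hj. apply (continuous_ext_loc _ (Derive_n g j)).
    + generalize HDn. apply filter_imp. auto.
    + now apply Hc.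
Qed.

Lemma is_derive_frac_lin (A B C D t : R) : C * t + D <> 0 ->
  is_derive (fun s => (A * s + B) / (C * s + D)) t ((A * D - B * C) / (C * t + D) ^ 2).
Proof. intros Ht. auto_derive; [exact Ht |]. field. exact Ht. Qed.

Lemma Ck1_frac_lin (A B C D t : R) :
  C * t + D <> 0 -> Ck1 1 (fun s => (A * s + B) / (C * s + D)) t.
Proof.
  intros Ht. split.
  - generalize (affine_neq0_locally C D t Ht). apply filter_imp.
    intros s Hs j Hj. destruct j; [|lia]. eexists. now apply is_derive_frac_lin.
  - intros [|[|j]] Hj; [| |lia]; simpl.
    + apply ex_derive_continuous_R. eexists. now apply is_derive_frac_lin.
    + apply (continuous_ext_loc _ (fun s => (A * D - B * C) / (C * s + D) ^ 2)).
      * generalize (affine_neq0_locally C D t Ht). apply filter_imp.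
        intros s Hs. symmetry. now apply is_derive_unique, is_derive_frac_lin.
      * apply ex_derive_continuous_R. auto_derive.
        rewrite Rmult_1_r. now apply Rmult_integral_contrapositive_currified.
Qed.

Lemma pd_fst_only (f : R * R -> R) (g : R -> R) (s : R * R) :
  locally s (fun q => f q = g (fst q)) -> forall l,
  locally s (fun q =>
    pd l f q = if forallb (fun b => b) l then Derive_n g (length l) (fst q) else 0).
Proof.
  intros Hf l. induction l as [|[] l IH]; simpl; [exact Hf | |];
    generalize (locally_locally _ _ IH); apply filter_imp; intros [q1 q2] Hq; simpl.
  - rewrite (Derive_ext_loc _
      (fun t => if forallb (fun b => b) l then Derive_n g (length l) t else 0)).
    + destruct (forallb (fun b => b) l); [reflexivity | apply Derive_const].
    + exact (locally_slice_fst q1 q2 _ Hq).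
  - rewrite (Derive_ext_loc _
      (fun _ => if forallb (fun b => b) l then Derive_n g (length l) q1 else 0)).
    + apply Derive_const.
    + exact (locally_slice_snd q1 q2 _ Hq).
Qed.

Lemma pd_snd_only (f : R * R -> R) (g : R -> R) (s : R * R) :
  locally s (fun q => f q = g (snd q)) -> forall l,
  locally s (fun q => pd l f q = if forallb negb l then Derive_n g (length l) (snd q) else 0).
Proof.
  intros Hf l. induction l as [|[] l IH]; simpl; [exact Hf | |];
    generalize (locally_locally _ _ IH); apply filter_imp; intros [q1 q2] Hq; simpl.
  - rewrite (Derive_ext_loc _ (fun _ => if forallb negb l then Derive_n g (length l) q2 else 0)).
    + apply Derive_const.
    + exact (locally_slice_fst q1 q2 _ Hq).
  - rewrite (Derive_ext_loc _ (fun t => if forallb negb l then Derive_n g (length l) t else 0)).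
    + destruct (forallb negb l); [reflexivity | apply Derive_const].
    + exact (locally_slice_snd q1 q2 _ Hq).
Qed.

Lemma pd1_fst_only (f : R * R -> R) (g : R -> R) (s : R * R) :
  locally s (fun q => f q = g (fst q)) ->
  pd (true :: nil) f s = Derive g (fst s) /\ pd (false :: nil) f s = 0.
Proof.
  intros Hf. split.
  - exact (locally_singleton _ _ (pd_fst_only f g s Hf (true :: nil))).
  - exact (locally_singleton _ _ (pd_fst_only f g s Hf (false :: nil))).
Qed.

Lemma pd1_snd_only (f : R * R -> R) (g : R -> R) (s : R * R) :
  locally s (fun q => f q = g (snd q)) ->
  pd (true :: nil) f s = 0 /\ pd (false :: nil) f s = Derive g (snd s).
Proof.
  intros Hf. split.
  - exact (locally_singleton _ _ (pd_snd_only f g s Hf (true :: nil))).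
  - exact (locally_singleton _ _ (pd_snd_only f g s Hf (false :: nil))).
Qed.

Lemma Ck2_fst_only (k : nat) (f : R * R -> R) (g : R -> R) (s : R * R) :
  Ck1 k g (fst s) -> locally s (fun q => f q = g (fst q)) -> Ck2 k f s.
Proof.
  intros [Hd Hc] Hf.
  pose (h l t := if forallb (fun b => b) l then Derive_n g (length l) t else 0).
  assert (Hpd : locally s (fun q => forall l, locally q (fun q' => pd l f q' = h l (fst q')))).
  { generalize (locally_locally _ _ Hf). apply filter_imp.
    intros q Hq l. exact (pd_fst_only f g q Hq l). }
  split.
  - generalize (filter_and _ _ Hpd (locally_fst s _ Hd)). apply filter_imp.
    intros [q1 q2] [Hq Hdq] l Hl. simpl in Hdq |- *. split.
    + apply (ex_derive_ext_loc (h l)).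
      * generalize (locally_slice_fst q1 q2 _ (Hq l)). apply filter_imp.
        intros t E. symmetry. exact E.
      * unfold h. destruct (forallb _ l); [now apply Hdq | apply ex_derive_const].
    + apply (ex_derive_ext_loc (fun _ => h l q1)).
      * generalize (locally_slice_snd q1 q2 _ (Hq l)). apply filter_imp.
        intros t E. symmetry. exact E.
      * apply ex_derive_const.
  - intros l Hl. apply (continuous_ext_loc _ (fun q => h l (fst q))).
    + generalize (locally_singleton _ _ Hpd l). apply filter_imp. intros q E. symmetry. exact E.
    + destruct s as [s1 s2]. apply continuous_comp; [apply continuous_fst |].
      unfold h. destruct (forallb _ l); [now apply Hc | apply continuous_const].
Qed.

Lemma Ck2_snd_only (k : nat) (f : R * R -> R) (g : R -> R) (s : R * R) :
  Ck1 k g (snd s) -> locally s (fun q => f q = g (snd q)) -> Ck2 k f s.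
Proof.
  intros [Hd Hc] Hf.
  pose (h l t := if forallb negb l then Derive_n g (length l) t else 0).
  assert (Hpd : locally s (fun q => forall l, locally q (fun q' => pd l f q' = h l (snd q')))).
  { generalize (locally_locally _ _ Hf). apply filter_imp.
    intros q Hq l. exact (pd_snd_only f g q Hq l). }
  split.
  - generalize (filter_and _ _ Hpd (locally_snd s _ Hd)). apply filter_imp.
    intros [q1 q2] [Hq Hdq] l Hl. simpl in Hdq |- *. split.
    + apply (ex_derive_ext_loc (fun _ => h l q2)).
      * generalize (locally_slice_fst q1 q2 _ (Hq l)). apply filter_imp.
        intros t E. symmetry. exact E.
      * apply ex_derive_const.
    + apply (ex_derive_ext_loc (h l)).
      * generalize (locally_slice_snd q1 q2 _ (Hq l)). apply filter_imp.
        intros t E. symmetry. exact E.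
      * unfold h. destruct (forallb _ l); [now apply Hdq | apply ex_derive_const].
  - intros l Hl. apply (continuous_ext_loc _ (fun q => h l (snd q))).
    + generalize (locally_singleton _ _ Hpd l). apply filter_imp. intros q E. symmetry. exact E.
    + destruct s as [s1 s2]. apply continuous_comp; [apply continuous_snd |].
      unfold h. destruct (forallb _ l); [now apply Hc | apply continuous_const].
Qed.

Lemma pd_repeat_true (f : R * R -> R) (c : R) (j : nat) (t : R) :
  pd (repeat true j) f (t, c) = Derive_n (fun s => f (s, c)) j t.
Proof.
  revert t. induction j as [|j IH]; intros t; [reflexivity |].
  simpl. apply Derive_ext. exact IH.
Qed.

Lemma Ck1_slice_fst (k : nat) (f : R * R -> R) (t c : R) :
  Ck2 k f (t, c) -> Ck1 k (fun s => f (s, c)) t.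
Proof.
  intros [Hd Hc]. split.
  - generalize (locally_slice_fst t c _ Hd). apply filter_imp. intros s Hs j Hj.
    apply (ex_derive_ext (fun u => pd (repeat true j) f (u, c))).
    + intros u. apply pd_repeat_true.
    + apply (Hs (repeat true j)). now rewrite repeat_length.
  - intros j Hj. apply (continuous_ext (fun u => pd (repeat true j) f (u, c))).
    + intros u. apply pd_repeat_true.
    + apply continuous_slice_fst, Hc. now rewrite repeat_length.
Qed.

(** * Charts and projective maps of RP^1 *)

Lemma cinv_neq (a : P1) (t : R) : cinv a t <> a.
Proof.
  destruct a as [r|]; simpl; [|discriminate].
  destruct (Req_EM_T t 0) as [Ht|Ht]; [discriminate|].
  intros E. injection E. intros E'. apply (Rinv_neq_0_compat t Ht).
  unfold Rdiv in E'. lra.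
Qed.

Lemma cinv_chart (b p : P1) : p <> b -> cinv b (chart b p) = p.
Proof.
  intros Hp. destruct b as [r|], p as [x|]; simpl; try congruence.
  - assert (Hx : x - r <> 0) by (intros E; apply Hp; f_equal; lra).
    destruct (Req_EM_T (-1 / (x - r)) 0) as [E|E].
    + exfalso. unfold Rdiv in E. apply Rmult_integral in E.
      destruct E as [E|E]; [lra | exact (Rinv_neq_0_compat _ Hx E)].
    + f_equal. field. exact Hx.
  - destruct (Req_EM_T 0 0); [reflexivity | congruence].
Qed.

Lemma chart_inj (b p p' : P1) : p <> b -> p' <> b -> chart b p = chart b p' -> p = p'.
Proof.
  intros Hp Hp' E. rewrite <- (cinv_chart b p Hp), <- (cinv_chart b p' Hp'), E. reflexivity.
Qed.

Lemma exists_P1_neq2 (p q : P1) : exists b, b <> p /\ b <> q.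
Proof.
  exists (Some (Rabs (chart None p) + Rabs (chart None q) + 1)).
  pose proof (Rle_abs (chart None p)); pose proof (Rabs_pos (chart None p)).
  pose proof (Rle_abs (chart None q)); pose proof (Rabs_pos (chart None q)).
  destruct p as [x|], q as [y|]; simpl in *; split; intros E; try discriminate;
    injection E; lra.
Qed.

Lemma exists_P1_neq (p : P1) : exists q, q <> p.
Proof. destruct (exists_P1_neq2 p p) as [q [Hq _]]. now exists q. Qed.

(* Homogeneous coordinates, in which [mobius a b c d] acts as the linear map [lin a b c d]
   ([mobius_hcoord]); [hpoint (0, 0)] is a junk value. *)
Definition hcoord (p : P1) : R * R := match p with Some x => (x, 1) | None => (1, 0) end.

Definition hpoint (v : R * R) : P1 :=
  if Req_EM_T (snd v) 0 then None else Some (fst v / snd v).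

Definition lin (a b c d : R) (v : R * R) : R * R :=
  (a * fst v + b * snd v, c * fst v + d * snd v).

Lemma mobius_hcoord (a b c d : R) (p : P1) :
  mobius a b c d p = hpoint (lin a b c d (hcoord p)).
Proof.
  unfold hpoint, lin. destruct p as [x|]; simpl.
  - now rewrite !Rmult_1_r.
  - replace (c * 1 + d * 0) with c by ring. replace (a * 1 + b * 0) with a by ring.
    reflexivity.
Qed.

Lemma hpoint_scale (l : R) (v : R * R) :
  l <> 0 -> hpoint (l * fst v, l * snd v) = hpoint v.
Proof.
  intros Hl. unfold hpoint; simpl.
  destruct (Req_EM_T (l * snd v) 0) as [E|E], (Req_EM_T (snd v) 0) as [E'|E'];
    try reflexivity.
  - exfalso. apply Rmult_integral in E. tauto.
  - exfalso. apply E. rewrite E'. ring.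
  - f_equal. field. tauto.
Qed.

Lemma hcoord_hpoint (v : R * R) :
  v <> (0, 0) -> exists l, l <> 0 /\ hcoord (hpoint v) = (l * fst v, l * snd v).
Proof.
  destruct v as [x y]. intros Hv. unfold hpoint; simpl.
  destruct (Req_EM_T y 0) as [Hy|Hy].
  - subst y. assert (Hx : x <> 0) by (intros Hx; apply Hv; now subst x).
    exists (/ x). split; [now apply Rinv_neq_0_compat |]. simpl. f_equal; field; exact Hx.
  - exists (/ y). split; [now apply Rinv_neq_0_compat |]. simpl. f_equal; field; exact Hy.
Qed.

Lemma lin_neq0 (a b c d : R) (v : R * R) :
  a * d - b * c <> 0 -> v <> (0, 0) -> lin a b c d v <> (0, 0).
Proof.
  destruct v as [x y]. unfold lin; simpl. intros Hdet Hv E. injection E. intros E2 E1.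
  assert (Ex : (a * d - b * c) * x = 0).
  { replace ((a * d - b * c) * x) with (d * (a * x + b * y) - b * (c * x + d * y)) by ring.
    rewrite E1, E2. ring. }
  assert (Ey : (a * d - b * c) * y = 0).
  { replace ((a * d - b * c) * y) with (a * (c * x + d * y) - c * (a * x + b * y)) by ring.
    rewrite E1, E2. ring. }
  apply Rmult_integral in Ex, Ey. apply Hv. f_equal; tauto.
Qed.

Lemma hcoord_neq0 (p : P1) : hcoord p <> (0, 0).
Proof. destruct p; simpl; intros E; injection E; lra. Qed.

Lemma mobius_comp (a1 b1 c1 d1 a2 b2 c2 d2 : R) (p : P1) :
  a2 * d2 - b2 * c2 <> 0 ->
  mobius a1 b1 c1 d1 (mobius a2 b2 c2 d2 p) =
  mobius (a1 * a2 + b1 * c2) (a1 * b2 + b1 * d2) (c1 * a2 + d1 * c2) (c1 * b2 + d1 * d2) p.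
Proof.
  intros Hdet. rewrite !mobius_hcoord.
  destruct (hcoord_hpoint (lin a2 b2 c2 d2 (hcoord p))) as [l [Hl E]].
  { apply lin_neq0; [exact Hdet | apply hcoord_neq0]. }
  rewrite E, <- (hpoint_scale l (lin _ _ _ _ (hcoord p)) Hl). f_equal.
  destruct (hcoord p). unfold lin; simpl. f_equal; ring.
Qed.

Lemma projective_ext (phi psi : P1 -> P1) :
  (forall p, phi p = psi p) -> projective psi -> projective phi.
Proof.
  intros E (a & b & c & d & Hdet & Hpsi). exists a, b, c, d. split; [exact Hdet |].
  intros p. now rewrite E.
Qed.

Lemma projective_comp (phi psi : P1 -> P1) :
  projective phi -> projective psi -> projective (fun p => phi (psi p)).
Proof.
  intros (a1 & b1 & c1 & d1 & D1 & H1) (a2 & b2 & c2 & d2 & D2 & H2).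
  exists (a1 * a2 + b1 * c2), (a1 * b2 + b1 * d2), (c1 * a2 + d1 * c2), (c1 * b2 + d1 * d2).
  split.
  - replace (_ - _) with ((a1 * d1 - b1 * c1) * (a2 * d2 - b2 * c2)) by ring.
    now apply Rmult_integral_contrapositive_currified.
  - intros p. rewrite H2, H1. now apply mobius_comp.
Qed.

Lemma projective_id : projective (fun p => p).
Proof.
  exists 1, 0, 0, 1. split; [lra |]. intros [x|]; unfold mobius.
  - destruct (Req_EM_T (0 * x + 1) 0); [lra |]. f_equal. field.
  - destruct (Req_EM_T 0 0); [reflexivity | congruence].
Qed.

Lemma cinv_projective (a : P1) :
  exists M, projective M /\ M None = a /\ forall t, cinv a t = M (Some t).
Proof.
  destruct a as [r|].
  - exists (mobius r (-1) 1 0). split; [exists r, (-1), 1, 0; split; [lra | reflexivity] |].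
    split.
    + simpl. destruct (Req_EM_T 1 0); [lra |]. f_equal. field.
    + intros t. simpl. destruct (Req_EM_T t 0), (Req_EM_T (1 * t + 0) 0); try lra.
      * reflexivity.
      * f_equal. field. exact n.
  - exists (fun p => p). split; [exact projective_id | split; reflexivity].
Qed.

Lemma chart_projective (b : P1) :
  exists N, projective N /\ N b = None /\ forall p, p <> b -> N p = Some (chart b p).
Proof.
  destruct b as [r|].
  - exists (mobius 0 (-1) 1 (- r)). split; [exists 0, (-1), 1, (- r); split; [lra | reflexivity] |].
    split.
    + simpl. destruct (Req_EM_T (1 * r + - r) 0); [reflexivity | lra].
    + intros [x|] Hx; simpl.
      * destruct (Req_EM_T (1 * x + - r) 0) as [E|E].
        -- exfalso. apply Hx. f_equal. lra.
        -- f_equal. field. intros E'. apply E. lra.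
      * destruct (Req_EM_T 1 0); [lra |]. f_equal. field.
  - exists (fun p => p). split; [exact projective_id | split; [reflexivity |]].
    intros [x|] Hx; [reflexivity | congruence].
Qed.

Lemma projective_in_charts (phi : P1 -> P1) (a b : P1) :
  projective phi ->
  exists A B C D, A * D - B * C <> 0 /\ forall t, phi (cinv a t) <> b ->
    C * t + D <> 0 /\
    locally t (fun s => phi (cinv a s) <> b /\
                        chart b (phi (cinv a s)) = (A * s + B) / (C * s + D)).
Proof.
  intros Hphi.
  destruct (cinv_projective a) as (M & HM & _ & Ha).
  destruct (chart_projective b) as (N & HN & Nb & Nchart).
  destruct (projective_comp _ _ HN (projective_comp _ _ Hphi HM))
    as (A & B & C & D & Hdet & Hcomp).
  assert (Hm : forall s, phi (cinv a s) <> b ->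
                 C * s + D <> 0 /\ chart b (phi (cinv a s)) = (A * s + B) / (C * s + D)).
  { intros s Hs. pose proof (Hcomp (Some s)) as E. rewrite <- Ha, (Nchart _ Hs) in E.
    simpl in E. destruct (Req_EM_T (C * s + D) 0); [discriminate |].
    split; [assumption | now injection E]. }
  assert (Hb : forall s, C * s + D <> 0 -> phi (cinv a s) <> b).
  { intros s Hs Eb. pose proof (Hcomp (Some s)) as E. rewrite <- Ha, Eb, Nb in E.
    simpl in E. destruct (Req_EM_T (C * s + D) 0); [contradiction | discriminate]. }
  exists A, B, C, D. split; [exact Hdet |]. intros t Ht.
  split; [exact (proj1 (Hm t Ht)) |].
  generalize (affine_neq0_locally C D t (proj1 (Hm t Ht))). apply filter_imp.
  intros s Hs. split; [now apply Hb | exact (proj2 (Hm s (Hb s Hs)))].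
Qed.

Lemma projective_P1_Ck1 (phi : P1 -> P1) : projective phi -> P1_Ck 1 phi.
Proof.
  intros Hphi a b t Ht.
  destruct (projective_in_charts phi a b Hphi) as (A & B & C & D & _ & Hm).
  destruct (Hm t Ht) as [Ct Hloc]. split.
  - generalize Hloc. apply filter_imp. tauto.
  - apply (Ck1_ext_loc 1 (fun s => (A * s + B) / (C * s + D))).
    + generalize Hloc. apply filter_imp. intros s Hs. symmetry. apply Hs.
    + now apply Ck1_frac_lin.
Qed.

Lemma InA_cinv2_locally (a1 a2 : P1) (s : R * R) :
  InA (cinv2 a1 a2 s) -> locally s (fun q => InA (cinv2 a1 a2 q)).
Proof.
  destruct s as [s1 s2]. unfold InA, cinv2. simpl. intros Hs.
  destruct (exists_P1_neq2 (cinv a1 s1) (cinv a2 s2)) as [b [Hb1 Hb2]].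
  destruct (projective_P1_Ck1 _ projective_id a1 b s1 (not_eq_sym Hb1)) as [L1 [_ C1]].
  destruct (projective_P1_Ck1 _ projective_id a2 b s2 (not_eq_sym Hb2)) as [L2 [_ C2]].
  set (g1 := fun s => chart b (cinv a1 s)) in C1.
  set (g2 := fun s => chart b (cinv a2 s)) in C2.
  assert (Hc : continuous (fun q : R * R => minus (g1 (fst q)) (g2 (snd q))) (s1, s2)).
  { apply (@continuous_minus _ R_AbsRing R_NormedModule).
    - apply (continuous_comp fst g1); [apply continuous_fst | exact (C1 0%nat (le_0_n 1))].
    - apply (continuous_comp snd g2); [apply continuous_snd | exact (C2 0%nat (le_0_n 1))]. }
  assert (Hne : minus (g1 s1) (g2 s2) <> 0).
  { intros E. apply Hs, (chart_inj b); [now apply not_eq_sym .. |].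
    unfold minus, plus, opp in E; simpl in E. unfold g1, g2 in E. lra. }
  generalize (filter_and _ _ (continuous_neq_locally _ _ 0 Hc Hne)
    (filter_and _ _ (locally_fst (s1, s2) _ L1) (locally_snd (s1, s2) _ L2))).
  apply filter_imp. intros q [Hq _] E. apply Hq. unfold g1, g2. simpl in E |- *.
  rewrite E. unfold minus, plus, opp; simpl. ring.
Qed.

(** * Diagonal maps and split maps of A *)

Definition diag_on_A (phi : P1 -> P1) (Phi : P1 * P1 -> P1 * P1) : Prop :=
  forall p, InA p -> Phi p = (phi (fst p), phi (snd p)).

Section DiagonalMaps.
Variables (phi : P1 -> P1) (Phi : P1 * P1 -> P1 * P1).
Hypothesis Phi_diag : diag_on_A phi Phi.

Lemma diag_chart_fst (a1 a2 b : P1) (s : R * R) : InA (cinv2 a1 a2 s) ->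
  locally s (fun q => chart b (fst (Phi (cinv2 a1 a2 q))) = chart b (phi (cinv a1 (fst q)))).
Proof.
  intros Hs. generalize (InA_cinv2_locally a1 a2 s Hs). apply filter_imp.
  intros q Hq. now rewrite Phi_diag.
Qed.

Lemma diag_chart_snd (a1 a2 b : P1) (s : R * R) : InA (cinv2 a1 a2 s) ->
  locally s (fun q => chart b (snd (Phi (cinv2 a1 a2 q))) = chart b (phi (cinv a2 (snd q)))).
Proof.
  intros Hs. generalize (InA_cinv2_locally a1 a2 s Hs). apply filter_imp.
  intros q Hq. now rewrite Phi_diag.
Qed.

Lemma diag_A_Ck (k : nat) : P1_Ck k phi -> A_Ck k Phi.
Proof.
  intros Hphi a1 a2 b1 b2 s Hs H1 H2.
  rewrite Phi_diag in H1, H2 by exact Hs.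
  destruct (Hphi a1 b1 (fst s) H1) as [L1 C1], (Hphi a2 b2 (snd s) H2) as [L2 C2].
  split; [|split].
  - generalize (filter_and _ _ (InA_cinv2_locally a1 a2 s Hs)
      (filter_and _ _ (locally_fst s _ L1) (locally_snd s _ L2))).
    apply filter_imp. intros q [Hq [Hq1 Hq2]]. rewrite Phi_diag by exact Hq. tauto.
  - exact (Ck2_fst_only k _ _ s C1 (diag_chart_fst a1 a2 b1 s Hs)).
  - exact (Ck2_snd_only k _ _ s C2 (diag_chart_snd a1 a2 b2 s Hs)).
Qed.

Lemma diag_P1_Ck (k : nat) : A_Ck k Phi -> P1_Ck k phi.
Proof.
  intros HPhi a b t Ht.
  set (x := cinv a t).
  assert (Hs : InA (cinv2 a x (t, 0))) by exact (not_eq_sym (cinv_neq x 0)).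
  destruct (exists_P1_neq (phi (cinv x 0))) as [b2 Hb2].
  assert (H1 : fst (Phi (cinv2 a x (t, 0))) <> b) by (now rewrite Phi_diag).
  assert (H2 : snd (Phi (cinv2 a x (t, 0))) <> b2)
    by (rewrite Phi_diag by exact Hs; exact (not_eq_sym Hb2)).
  destruct (HPhi a x b b2 (t, 0) Hs H1 H2) as [Hloc [Hck _]].
  split.
  - generalize (locally_slice_fst t 0 _ Hloc). apply filter_imp.
    intros s [Hq [Hq1 _]]. now rewrite Phi_diag in Hq1.
  - apply (Ck1_ext_loc k _ _ t (locally_slice_fst t 0 _ (diag_chart_fst a x b (t, 0) Hs))).
    exact (Ck1_slice_fst k _ t 0 Hck).
Qed.

Lemma diag_P1_C (r : reg) : A_C r Phi -> P1_C r phi.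
Proof.
  destruct r as [k|]; simpl.
  - exact (diag_P1_Ck k).
  - intros HPhi k. exact (diag_P1_Ck k (HPhi k)).
Qed.

End DiagonalMaps.

Section SplitMaps.
Variables (Phi Psi : P1 * P1 -> P1 * P1) (f1 f2 : P1 -> P1).
Hypothesis Phi_A : forall p, InA p -> InA (Phi p).
Hypothesis Psi_A : forall p, InA p -> InA (Psi p).
Hypothesis PsiK : forall p, InA p -> Psi (Phi p) = p.
Hypothesis PhiK : forall p, InA p -> Phi (Psi p) = p.
Hypothesis Phi_fst : forall p, InA p -> fst (Phi p) = f1 (fst p).
Hypothesis Phi_snd : forall p, InA p -> snd (Phi p) = f2 (snd p).

Lemma split_map_pair (p : P1 * P1) : InA p -> Phi p = (f1 (fst p), f2 (snd p)).
Proof.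
  intros Hp. rewrite (surjective_pairing (Phi p)), Phi_fst, Phi_snd by exact Hp.
  reflexivity.
Qed.

Lemma split_map_fst_inj (x x' : P1) : f1 x = f1 x' -> x = x'.
Proof.
  intros E. destruct (exists_P1_neq2 x x') as [w [Hw Hw']].
  assert (Hxw : InA (x, w)) by exact (not_eq_sym Hw).
  assert (Hxw' : InA (x', w)) by exact (not_eq_sym Hw').
  assert (Ep : Phi (x, w) = Phi (x', w))
    by (rewrite !split_map_pair by assumption; simpl; now rewrite E).
  apply (f_equal Psi) in Ep. rewrite !PsiK in Ep by assumption. now injection Ep.
Qed.

Lemma split_map_fst_surj (z : P1) : exists x, f1 x = z.
Proof.
  destruct (exists_P1_neq z) as [w Hw].
  assert (Hzw : InA (z, w)) by exact (not_eq_sym Hw).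
  exists (fst (Psi (z, w))). rewrite <- Phi_fst by now apply Psi_A.
  now rewrite PhiK.
Qed.

Lemma split_map_snd_surj (z : P1) : exists y, f2 y = z.
Proof.
  destruct (exists_P1_neq z) as [w Hw].
  assert (Hwz : InA (w, z)) by exact Hw.
  exists (snd (Psi (w, z))). rewrite <- Phi_snd by now apply Psi_A.
  now rewrite PhiK.
Qed.

(* If [f2 y = f1 x] with [x <> y], then [Phi] would map [(x, y)] onto the diagonal. *)
Lemma split_map_snd_eq_fst (x : P1) : f2 x = f1 x.
Proof.
  destruct (split_map_snd_surj (f1 x)) as [y Hy].
  destruct (classic (x = y)) as [Exy|Hxy]; [now subst y |].
  exfalso. apply (Phi_A (x, y) Hxy). rewrite split_map_pair by exact Hxy. simpl. now rewrite Hy.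
Qed.

End SplitMaps.

Lemma split_map_diag (r : reg) (Phi : P1 * P1 -> P1 * P1) : split_map r Phi ->
  exists (phi psi : P1 -> P1) (Psi : P1 * P1 -> P1 * P1),
    (forall p, psi (phi p) = p) /\ (forall p, phi (psi p) = p) /\
    diag_on_A phi Phi /\ diag_on_A psi Psi /\ A_C r Phi /\ A_C r Psi.
Proof.
  intros [[Phi_A [Psi [Psi_A [PsiK [PhiK [HC HC']]]]]] [HL1 HL2]].
  destruct (choice _ HL1) as [f1 Hf1], (choice _ HL2) as [f2 Hf2].
  assert (Phi_fst : forall p, InA p -> fst (Phi p) = f1 (fst p))
    by (intros p Hp; exact (proj1 (Hf1 (fst p)) p Hp eq_refl)).
  assert (Phi_snd : forall p, InA p -> snd (Phi p) = f2 (snd p))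
    by (intros p Hp; exact (proj1 (Hf2 (snd p)) p Hp eq_refl)).
  destruct (choice _ (split_map_fst_surj Phi Psi f1 Psi_A PhiK Phi_fst)) as [psi f1K].
  assert (psiK : forall p, psi (f1 p) = p).
  { intros p. apply (split_map_fst_inj Phi Psi f1 f2 PsiK Phi_fst Phi_snd). apply f1K. }
  assert (Phi_diag : diag_on_A f1 Phi).
  { intros p Hp. rewrite (split_map_pair Phi f1 f2 Phi_fst Phi_snd p Hp).
    now rewrite (split_map_snd_eq_fst Phi Psi f1 f2 Phi_A Psi_A PhiK Phi_fst Phi_snd). }
  exists f1, psi, Psi. repeat split; try assumption.
  intros p Hp. rewrite <- (PhiK p Hp) at 2 3. rewrite Phi_diag by now apply Psi_A.
  simpl. rewrite !psiK. apply surjective_pairing.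
Qed.

(** * Rigidity of the secant equation *)

Lemma pow2_inj_same_sign (a b : R) : a ^ 2 = b ^ 2 -> 0 < a * b -> a = b.
Proof.
  intros Hsq Hab.
  assert (F : (a - b) * (a + b) = 0).
  { replace ((a - b) * (a + b)) with (a ^ 2 - b ^ 2) by ring. lra. }
  destruct (Rmult_integral _ _ F) as [F'|F']; [lra |].
  replace b with (- a) in Hab by lra. nra.
Qed.

Section SecantRigidity.
Variables (u du : R -> R).
Hypothesis u_derive : forall x, is_derive u x (du x).
Hypothesis u_inj : forall x y, x <> y -> u x <> u y.
Hypothesis u_secant : forall x y, x <> y -> du x * du y * (x - y) ^ 2 = (u x - u y) ^ 2.

Lemma secant_deriv_pos (x : R) : 0 < du x * du 0.
Proof.
  assert (Hpos : forall y, y <> 0 -> 0 < du y * du 0).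
  { intros y Hy. pose proof (u_secant y 0 Hy) as E. pose proof (u_inj y 0 Hy).
    assert (0 < (u y - u 0) ^ 2) by (apply pow2_gt_0; lra).
    assert (0 < (y - 0) ^ 2) by (apply pow2_gt_0; lra). nra. }
  destruct (Req_dec x 0) as [->|Hx]; [|exact (Hpos x Hx)].
  pose proof (Hpos 1 R1_neq_R0) as H1.
  assert (du 0 <> 0) by (intros E; rewrite E in H1; lra). nra.
Qed.

Lemma secant_sign (x y : R) : x <> y -> 0 < (u x - u y) * (x - y) * du 0.
Proof.
  intros Hxy. destruct (MVT_gen u y x du) as [c [_ Hc]].
  - intros z _. apply u_derive.
  - intros z _. apply continuity_pt_filterlim, ex_derive_continuous_R. eexists. apply u_derive.
  - rewrite Hc. pose proof (secant_deriv_pos c).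
    assert (0 < (x - y) * (x - y)) by (apply Rsqr_pos_lt; lra). nra.
Qed.

Let G (x : R) := sqrt (du x * du 0).

(* [G x * G y] is a square root of [du x * du y]; [secant_sign] fixes the sign. *)
Lemma secant_sqrt (x y : R) : (u x - u y) * du 0 = G x * G y * (x - y).
Proof.
  destruct (Req_dec x y) as [->|Hxy]; [ring |].
  assert (HG : forall z, G z * G z = du z * du 0)
    by (intros z; apply sqrt_sqrt, Rlt_le, secant_deriv_pos).
  assert (Gx : 0 < G x) by apply sqrt_lt_R0, secant_deriv_pos.
  assert (Gy : 0 < G y) by apply sqrt_lt_R0, secant_deriv_pos.
  pose proof (secant_sign x y Hxy) as Hs. pose proof (u_secant x y Hxy) as E.
  assert (Sq : ((u x - u y) * du 0) ^ 2 = (G x * G y * (x - y)) ^ 2).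
  { replace ((G x * G y * (x - y)) ^ 2) with ((G x * G x) * (G y * G y) * (x - y) ^ 2) by ring.
    rewrite !HG, Rpow_mult_distr, <- E. ring. }
  assert (Pos : 0 < (u x - u y) * du 0 * (G x * G y * (x - y))).
  { assert (0 < G x * G y) by nra. nra. }
  exact (pow2_inj_same_sign _ _ Sq Pos).
Qed.

Lemma secant_three_point (x : R) : G x * (G 0 * x - G 1 * (x - 1)) = G 1 * G 0.
Proof.
  pose proof (secant_sqrt x 0). pose proof (secant_sqrt x 1). pose proof (secant_sqrt 1 0).
  nra.
Qed.

(* A fractional-linear [G] would have a pole on R; being defined everywhere, [G] is constant. *)
Lemma secant_sqrt_const (x : R) : G x = G 0.
Proof.
  assert (G0 : 0 < G 0) by apply sqrt_lt_R0, secant_deriv_pos.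
  assert (G1 : 0 < G 1) by apply sqrt_lt_R0, secant_deriv_pos.
  assert (E01 : G 0 = G 1).
  { destruct (Req_dec (G 0) (G 1)) as [E|E]; [exact E | exfalso].
    pose proof (secant_three_point (G 1 / (G 1 - G 0))) as K.
    replace (G 0 * (G 1 / (G 1 - G 0)) - G 1 * (G 1 / (G 1 - G 0) - 1)) with 0 in K
      by (field; lra).
    nra. }
  pose proof (secant_three_point x) as K. rewrite <- E01 in K.
  apply (Rmult_eq_reg_r (G 0)); [nra | lra].
Qed.

Lemma secant_affine (x : R) : u x = u 0 + du 0 * x.
Proof.
  assert (D0 : du 0 <> 0)
    by (pose proof (secant_deriv_pos 0) as H0; intros E; rewrite E in H0; lra).
  assert (HG : G 0 * G 0 = du 0 * du 0) by apply sqrt_sqrt, Rlt_le, secant_deriv_pos.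
  pose proof (secant_sqrt x 0) as E. rewrite secant_sqrt_const, HG in E.
  apply (Rmult_eq_reg_r (du 0)); [nra | exact D0].
Qed.

End SecantRigidity.

(** * Isometries of g0 *)

Lemma diag_pullback_g0_iff (phi : P1 -> P1) (Phi : P1 * P1 -> P1 * P1) (a b : P1) (s : R * R) :
  diag_on_A phi Phi -> InA (cinv2 a a s) ->
  let g := fun t => chart b (phi (cinv a t)) in
  let u := fun q => chart b (fst (Phi (cinv2 a a q))) in
  let v := fun q => chart b (snd (Phi (cinv2 a a q))) in
  (pd (true :: nil) u s * pd (true :: nil) v s = 0 /\
   pd (false :: nil) u s * pd (false :: nil) v s = 0 /\
   (pd (true :: nil) u s * pd (false :: nil) v s
      + pd (false :: nil) u s * pd (true :: nil) v s) / (u s - v s) ^ 2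
     = 1 / (fst s - snd s) ^ 2) <->
  Derive g (fst s) * Derive g (snd s) / (g (fst s) - g (snd s)) ^ 2 = 1 / (fst s - snd s) ^ 2.
Proof.
  intros Phi_diag Hs g u v.
  pose proof (diag_chart_fst phi Phi Phi_diag a a b s Hs) as Hu.
  pose proof (diag_chart_snd phi Phi Phi_diag a a b s Hs) as Hv.
  destruct (pd1_fst_only u g s Hu) as [-> ->], (pd1_snd_only v g s Hv) as [-> ->].
  change (u s) with (chart b (fst (Phi (cinv2 a a s)))).
  change (v s) with (chart b (snd (Phi (cinv2 a a s)))).
  rewrite (locally_singleton _ _ Hu), (locally_singleton _ _ Hv).
  rewrite !Rmult_0_l, !Rmult_0_r, Rplus_0_r. tauto.
Qed.

Lemma frac_lin_secant (A B C D s1 s2 : R) :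
  A * D - B * C <> 0 -> C * s1 + D <> 0 -> C * s2 + D <> 0 -> s1 <> s2 ->
  (A * D - B * C) / (C * s1 + D) ^ 2 * ((A * D - B * C) / (C * s2 + D) ^ 2)
    / ((A * s1 + B) / (C * s1 + D) - (A * s2 + B) / (C * s2 + D)) ^ 2
  = 1 / (s1 - s2) ^ 2.
Proof.
  intros Hdet H1 H2 Hs.
  replace ((A * s1 + B) / (C * s1 + D) - (A * s2 + B) / (C * s2 + D))
    with ((A * D - B * C) * (s1 - s2) / ((C * s1 + D) * (C * s2 + D))) by (field; auto).
  field. repeat split; auto. lra.
Qed.

Lemma projective_of_affine_chart (phi : P1 -> P1) (b : P1) (c k : R) :
  k <> 0 -> phi None = b -> (forall x, phi (Some x) = cinv b (c + k * x)) -> projective phi.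
Proof.
  intros Hk Hb Hphi. destruct (cinv_projective b) as (M & HM & HMb & HMc).
  apply (projective_ext _ (fun p => M (mobius k c 0 1 p))).
  - intros [x|]; simpl.
    + rewrite Hphi, HMc. destruct (Req_EM_T (0 * x + 1) 0); [lra |].
      f_equal. f_equal. field.
    + destruct (Req_EM_T 0 0); [now rewrite Hb, HMb | congruence].
  - apply (projective_comp _ _ HM). exists k, c, 0, 1.
    split; [lra | reflexivity].
Qed.

Lemma isometry_projective (phi : P1 -> P1) (Phi : P1 * P1 -> P1 * P1) :
  (forall p q, phi p = phi q -> p = q) -> diag_on_A phi Phi -> isometry_g0 Phi -> projective phi.
Proof.
  intros phi_inj Phi_diag [HPhi Hiso].
  set (b := phi None). set (u := fun x => chart b (phi (Some x))).
  assert (Hb : forall x, phi (Some x) <> b) by (intros x E; discriminate (phi_inj _ _ E)).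
  assert (u_inj : forall x y, x <> y -> u x <> u y).
  { intros x y Hxy E. apply Hxy. apply chart_inj in E; [|apply Hb ..].
    apply phi_inj in E. now injection E. }
  assert (u_der : forall x, ex_derive u x).
  { intros x. destruct (diag_P1_Ck phi Phi Phi_diag 1 HPhi None b x (Hb x)) as [_ [Hd _]].
    exact (locally_singleton _ _ Hd 0%nat Nat.lt_0_1). }
  assert (u_secant : forall x y, x <> y ->
            Derive u x * Derive u y * (x - y) ^ 2 = (u x - u y) ^ 2).
  { intros x y Hxy.
    assert (Hs : InA (cinv2 None None (x, y))) by (intros E; injection E; auto).
    assert (E : Derive u x * Derive u y / (u x - u y) ^ 2 = 1 / (x - y) ^ 2).
    { apply (diag_pullback_g0_iff phi Phi None b (x, y) Phi_diag Hs).
      apply Hiso; [exact Hs | rewrite Phi_diag by exact Hs; apply Hb ..]. }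
    assert (u x - u y <> 0) by (pose proof (u_inj x y Hxy); lra).
    assert (x - y <> 0) by lra.
    set (P := Derive u x * Derive u y) in *.
    replace P with (P / (u x - u y) ^ 2 * (u x - u y) ^ 2) by (field; auto).
    rewrite E. field. auto. }
  pose proof (secant_affine u (Derive u) (fun x => Derive_correct _ _ (u_der x)) u_inj u_secant)
    as Haff.
  apply (projective_of_affine_chart phi b (u 0) (Derive u 0)); [| reflexivity |].
  - intros E. apply (u_inj 0 1); [lra |]. rewrite (Haff 1), E. ring.
  - intros x. rewrite <- Haff. unfold u. now rewrite cinv_chart.
Qed.

Lemma projective_isometry (phi : P1 -> P1) (Phi : P1 * P1 -> P1 * P1) :
  projective phi -> diag_on_A phi Phi -> isometry_g0 Phi.
Proof.
  intros Hphi Phi_diag.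
  split; [exact (diag_A_Ck phi Phi Phi_diag 1 (projective_P1_Ck1 phi Hphi)) |].
  intros a b [s1 s2] Hs H1 H2.
  apply (diag_pullback_g0_iff phi Phi a b (s1, s2) Phi_diag Hs). simpl.
  rewrite Phi_diag in H1, H2 by exact Hs.
  destruct (projective_in_charts phi a b Hphi) as (A & B & C & D & Hdet & Hm).
  assert (Hg : forall t, phi (cinv a t) <> b ->
    chart b (phi (cinv a t)) = (A * t + B) / (C * t + D) /\
    Derive (fun s => chart b (phi (cinv a s))) t = (A * D - B * C) / (C * t + D) ^ 2).
  { intros t Ht. destruct (Hm t Ht) as [Ct Lt].
    assert (Et : locally t (fun s => chart b (phi (cinv a s)) = (A * s + B) / (C * s + D)))
      by (generalize Lt; apply filter_imp; tauto).
    split; [exact (locally_singleton _ _ Et) |].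
    transitivity (Derive (fun s => (A * s + B) / (C * s + D)) t).
    - exact (Derive_ext_loc _ _ t Et).
    - now apply is_derive_unique, is_derive_frac_lin. }
  destruct (Hg s1 H1) as [-> ->], (Hg s2 H2) as [-> ->].
  apply frac_lin_secant; [exact Hdet | apply Hm; assumption .. |].
  intros E. subst s2. apply Hs. reflexivity.
Qed.

Theorem mainTheorem12 (r : reg) (Phi : P1 * P1 -> P1 * P1) :
  split_map r Phi ->
  exists phi : P1 -> P1,
    P1_diffeo r phi /\
    (forall p : P1 * P1, InA p -> Phi p = (phi (fst p), phi (snd p))) /\
    (isometry_g0 Phi <-> projective phi).
Proof.
  intros Hsplit.
  destruct (split_map_diag r Phi Hsplit)
    as (phi & psi & Psi & psiK & phiK & Phi_diag & Psi_diag & HPhi & HPsi).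
  exists phi. split; [| split; [exact Phi_diag | split]].
  - exists psi. repeat split; try assumption.
    + exact (diag_P1_C phi Phi Phi_diag r HPhi).
    + exact (diag_P1_C psi Psi Psi_diag r HPsi).
  - intros Hiso. apply (isometry_projective phi Phi); [| exact Phi_diag | exact Hiso].
    intros p q E. now rewrite <- (psiK p), <- (psiK q), E.
  - intros Hproj. exact (projective_isometry phi Phi Hproj Phi_diag).
Qed.
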